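(* Let $R$ be a positive integer, let $A \in \mathbb{R}^{R \times d_{\text{in}}}$ and $B \in \mathbb{R}^{d_{\text{out}} \times R}$, let $\vec{a}_i \in \mathbb{R}^{1\times d_{\text{in}}}$ denote the $i$-th row of $A$ and $\vec{b}_i \in \mathbb{R}^{d_{\text{out}}\times 1}$ the $i$-th column of $B$. For $r \in \{1,\dots,R\}$ define $f(\vec{x}; r) = \left(\sum_{i=1}^{r} \vec{b}_i \vec{a}_i\right)\vec{x}$ for $\vec{x}\in\mathbb{R}^{d_{\text{in}}}$. Let $(\vec{x},y)$ be a random pair with $\mathbb{E}[\|\vec{x}\|]<\infty$, and let $\mathcal{L}(\cdot, y)$ be a loss function that is $L_{\mathcal{L}}$-Lipschitz continuous in its first argument (with respect to the Euclidean norm on $\mathbb{R}^{d_{\text{out}}}$), uniformly in $y$. Let $E(r) = \mathbb{E}_{(\vec{x},y)}[\mathcal{L}(f(\vec{x}; r), y)]$ be the expected error at rank $r$. Then for any ranks $r_1 < r_{\text{int}} < R$, $$ |E(r_{\text{int}}) - E(r_1)| \le C \sum_{i=r_1+1}^{r_{\text{int}}} \|\vec{b}_i\|\,\|\vec{a}_i\|, $$ where $C = L_{\mathcal{L}} \cdot \mathbb{E}[\|\vec{x}\|]$.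
   Context: $\|\cdot\|$ denotes the Euclidean norm of a vector (row or column). The map $f(\cdot; r)$ is the output of a ''nested subspace'' linear layer truncated to rank $r$, i.e. using the weight matrix $W_r = B_r A_r$ where $A_r$ consists of the first $r$ rows of $A$ and $B_r$ of the first $r$ columns of $B$. *)

From HB Require Import structures.
From mathcomp Require Import all_boot all_order all_algebra.
From mathcomp Require Import all_classical all_reals all_analysis.
Set Implicit Arguments. Unset Strict Implicit. Unset Printing Implicit Defensive.
Import Order.TTheory GRing.Theory Num.Theory.
Local Open Scope ring_scope.

(* Euclidean norm of a (row or column) vector, written generally for a matrix
   (Frobenius norm; for a 1 x n or n x 1 matrix this is the Euclidean norm). *)
Definition enorm (R : realType) (m n : nat) (M : 'M[R]_(m, n)) : R :=
  Num.sqrt (\sum_(i < m) \sum_(j < n) M i j ^+ 2).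

(* Truncated-rank weight matrix W_r = sum_{i=1}^r b_i a_i (0-indexed: i < r). *)
Definition Wtrunc (R : realType) (Rk din dout : nat)
  (A : 'M[R]_(Rk, din)) (B : 'M[R]_(dout, Rk)) (r : nat) : 'M[R]_(dout, din) :=
  \sum_(i < Rk | (i < r)%N) (col i B *m row i A).

Definition ftrunc (R : realType) (Rk din dout : nat)
  (A : 'M[R]_(Rk, din)) (B : 'M[R]_(dout, Rk)) (r : nat) (x : 'cV[R]_din)
  : 'cV[R]_dout := Wtrunc A B r *m x.

From HB Require Import structures.
From mathcomp Require Import all_boot all_order all_algebra.
From mathcomp Require Import all_classical all_reals all_analysis.
From mathcomp Require Import ring lra.
Set Implicit Arguments.
Import Order.TTheory GRing.Theory Num.Theory.
Local Open Scope ring_scope.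

(* The rank-r1 and rank-rint layers differ by the rank-one terms b_i a_i with
   r1 <= i < rint, so by the triangle inequality and submultiplicativity of
   the Euclidean norm their outputs at x differ by at most
   (sum_i |b_i| |a_i|) |x|.  Lipschitz continuity of the loss transfers this
   pointwise bound to the losses, and integrating it against the law of
   (x, y) bounds the difference of the expected errors. *)

Section CauchySchwarz.
Context {R : realFieldType} {I : finType} (u v : I -> R).

Lemma lagrange_identity :
  \sum_i \sum_j (u i * v j - u j * v i) ^+ 2 =
  2 * ((\sum_i u i ^+ 2) * (\sum_i v i ^+ 2) - (\sum_i u i * v i) ^+ 2).
Proof.
have sqr_uv : (\sum_i u i ^+ 2) * (\sum_i v i ^+ 2) =
              \sum_i \sum_j (u i * v j) ^+ 2.
  rewrite mulr_suml; apply: eq_bigr => i _; rewrite mulr_sumr.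
  by apply: eq_bigr => j _; rewrite exprMn.
have sqr_vu : (\sum_i u i ^+ 2) * (\sum_i v i ^+ 2) =
              \sum_i \sum_j (u j * v i) ^+ 2.
  by rewrite sqr_uv exchange_big.
have sqr_dot : (\sum_i u i * v i) ^+ 2 =
               \sum_i \sum_j (u i * v j) * (u j * v i).
  rewrite expr2 mulr_suml; apply: eq_bigr => i _; rewrite mulr_sumr.
  by apply: eq_bigr => j _; ring.
rewrite mulrBr mulr2n mulrDl !mul1r {1}sqr_uv sqr_vu sqr_dot.
rewrite -big_split /= mulr_sumr -sumrB; apply: eq_bigr => i _.
by rewrite -big_split /= mulr_sumr -sumrB; apply: eq_bigr => j _; ring.
Qed.

Lemma cauchy_schwarz_sum :
  (\sum_i u i * v i) ^+ 2 <= (\sum_i u i ^+ 2) * (\sum_i v i ^+ 2).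
Proof.
have : 0 <= \sum_i \sum_j (u i * v j - u j * v i) ^+ 2.
  by apply: sumr_ge0 => i _; apply: sumr_ge0 => j _; exact: sqr_ge0.
rewrite lagrange_identity; lra.
Qed.

End CauchySchwarz.

Section EuclideanNorm.
Context {R : realType}.
Implicit Types m n p : nat.

Lemma enorm_ge0 m n (M : 'M[R]_(m, n)) : 0 <= enorm M.
Proof. exact: sqrtr_ge0. Qed.

Lemma sqr_enorm m n (M : 'M[R]_(m, n)) : enorm M ^+ 2 = \sum_i \sum_j M i j ^+ 2.
Proof.
by rewrite sqr_sqrtr //; apply: sumr_ge0 => i _; apply: sumr_ge0 => j _;
  exact: sqr_ge0.
Qed.

Lemma enorm0 m n : enorm (0 : 'M[R]_(m, n)) = 0.
Proof.
rewrite /enorm big1 ?sqrtr0 // => i _.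
by rewrite big1 // => j _; rewrite mxE expr0n.
Qed.

Lemma ler_enormD m n (M N : 'M[R]_(m, n)) : enorm (M + N) <= enorm M + enorm N.
Proof.
have M_ge0 := enorm_ge0 M; have N_ge0 := enorm_ge0 N.
have MN_ge0 := enorm_ge0 (M + N).
set dot := \sum_i \sum_j M i j * N i j.
have dot_le : dot ^+ 2 <= (enorm M * enorm N) ^+ 2.
  rewrite exprMn !sqr_enorm /dot !pair_bigA /=.
  exact: (cauchy_schwarz_sum (fun k => M k.1 k.2) (fun k => N k.1 k.2)).
have sqr_sum : enorm (M + N) ^+ 2 = enorm M ^+ 2 + enorm N ^+ 2 + 2 * dot.
  rewrite !sqr_enorm /dot mulr_sumr -!big_split; apply: eq_bigr => i _.
  by rewrite mulr_sumr -!big_split; apply: eq_bigr => j _; rewrite mxE /=; ring.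
have : dot <= enorm M * enorm N by have := mulr_ge0 M_ge0 N_ge0; nra.
nra.
Qed.

Lemma ler_enorm_sum (I : Type) (r : seq I) (P : pred I) m n
    (F : I -> 'M[R]_(m, n)) :
  enorm (\sum_(i <- r | P i) F i) <= \sum_(i <- r | P i) enorm (F i).
Proof.
apply: (big_ind2 (fun M a => enorm M <= a)) => [|M1 a1 M2 a2 le1 le2|//].
  by rewrite enorm0.
exact: le_trans (ler_enormD M1 M2) (lerD le1 le2).
Qed.

Lemma ler_enorm_mulmx m n p (M : 'M[R]_(m, n)) (N : 'M[R]_(n, p)) :
  enorm (M *m N) <= enorm M * enorm N.
Proof.
have sum_sqr_ge0 q s (K : 'M[R]_(q, s)) : 0 <= \sum_i \sum_j K i j ^+ 2.
  by apply: sumr_ge0 => i _; apply: sumr_ge0 => j _; exact: sqr_ge0.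
rewrite /enorm -sqrtrM // ler_sqrt; last exact: mulr_ge0.
rewrite mulr_suml; apply: ler_sum => i _.
rewrite exchange_big mulr_sumr; apply: ler_sum => j _; rewrite mxE.
exact: (cauchy_schwarz_sum (fun k => M i k) (fun k => N k j)).
Qed.

End EuclideanNorm.

Section TruncatedLayer.
Context {R : realType} {Rk din dout : nat}.
Variables (A : 'M[R]_(Rk, din)) (B : 'M[R]_(dout, Rk)).

Lemma WtruncB r1 r2 : (r1 <= r2)%N ->
  Wtrunc A B r2 - Wtrunc A B r1 =
  \sum_(i < Rk | (r1 <= i < r2)%N) col i B *m row i A.
Proof.
move=> le_r12; rewrite /Wtrunc (bigID (fun i : 'I_Rk => (i < r1)%N)) /=.
rewrite (eq_bigl (fun i : 'I_Rk => (i < r1)%N)); last first.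
  move=> i /=; case: (ltnP i r1) => [lt_ir1|_]; last by rewrite andbF.
  by rewrite andbT (leq_trans lt_ir1 le_r12).
rewrite addrAC subrr add0r; apply: eq_bigl => i /=.
by rewrite -leqNgt andbC.
Qed.

Lemma ler_enorm_ftruncB r1 r2 (x : 'cV[R]_din) : (r1 <= r2)%N ->
  enorm (ftrunc A B r2 x - ftrunc A B r1 x) <=
  (\sum_(i < Rk | (r1 <= i < r2)%N) enorm (col i B) * enorm (row i A)) * enorm x.
Proof.
move=> le_r12; rewrite /ftrunc -mulmxBl WtruncB // mulmx_suml.
apply: le_trans (ler_enorm_sum _ _ _) _; rewrite mulr_suml.
apply: ler_sum => i _; apply: le_trans (ler_enorm_mulmx _ _) _.
by apply: ler_wpM2r; [exact: enorm_ge0 | exact: ler_enorm_mulmx].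
Qed.

End TruncatedLayer.

Lemma ler_normr_RintegralB d (T : measurableType d) (R : realType)
    (mu : measure T R) (D : set T) (f g h : T -> R) (c : R) :
  measurable D ->
  mu.-integrable D (EFin \o f) -> mu.-integrable D (EFin \o g) ->
  mu.-integrable D (EFin \o h) ->
  (forall t, D t -> `|f t - g t| <= c * h t) ->
  `|Rintegral mu D f - Rintegral mu D g| <= c * Rintegral mu D h.
Proof.
move=> mD if_ ig ih le_fg.
have ifg : mu.-integrable D (EFin \o (fun t => f t - g t)).
  exact: eq_integrable mD _ _ _ (integrableB mD if_ ig).
have ich : mu.-integrable D (EFin \o (fun t => c * h t)).
  exact: eq_integrable mD _ _ _ (integrableZl mD c ih).
rewrite -RintegralB // -RintegralZl //.
apply: le_trans (le_normr_Rintegral mD ifg) _.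
exact: le_Rintegral mD (integrable_norm ifg) ich le_fg.
Qed.

Theorem proposition1 (R : realType) (d : measure_display) (T : measurableType d)
  (P : probability T R) (Y : Type)
  (Rk din dout : nat) (A : 'M[R]_(Rk, din)) (B : 'M[R]_(dout, Rk))
  (x : T -> 'cV[R]_din) (y : T -> Y)
  (Loss : 'cV[R]_dout -> Y -> R) (LL : R) (r1 rint : nat) :
  (0 < Rk)%N ->
  P.-integrable setT (fun t => (enorm (x t))%:E) ->
  0 <= LL ->
  (forall (yy : Y) (u v : 'cV[R]_dout), `|Loss u yy - Loss v yy| <= LL * enorm (u - v)) ->
  (forall r : nat, (1 <= r <= Rk)%N ->
     P.-integrable setT (fun t => (Loss (ftrunc A B r (x t)) (y t))%:E)) ->
  (1 <= r1)%N -> (r1 < rint)%N -> (rint < Rk)%N ->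
  `| Rintegral P setT (fun t => Loss (ftrunc A B rint (x t)) (y t))
     - Rintegral P setT (fun t => Loss (ftrunc A B r1 (x t)) (y t)) |
  <= (LL * Rintegral P setT (fun t => enorm (x t)))
     * \sum_(i < Rk | (r1 <= i < rint)%N) enorm (col i B) * enorm (row i A).
Proof.
move=> _ ix LL_ge0 lipschitz iLoss r1_ge1 lt_r1_rint lt_rint_Rk.
have le_r1_rint := ltnW lt_r1_rint.
have le_rint_Rk := ltnW lt_rint_Rk.
rewrite mulrAC; apply: ler_normr_RintegralB => //.
- by apply: iLoss; rewrite (leq_trans r1_ge1 le_r1_rint).
- by apply: iLoss; rewrite r1_ge1 (leq_trans le_r1_rint le_rint_Rk).
- move=> t _; apply: le_trans (lipschitz _ _ _) _; rewrite -mulrA.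
  apply: (ler_wpM2l LL_ge0).
  exact: ler_enorm_ftruncB A B r1 rint (x t) le_r1_rint.
Qed.
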